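(* (i) Let $h_1,h_2,h_3$ be smooth functions of $(u,u_x)$ and let $m=u-u_{xx}$. The function $$k=h_1(u,u_x)m+h_2(u,u_x)m^2+h_3(u,u_x)m^3$$ satisfies $\hat E_u(k)=0$ if and only if $$h_1=u_xk_1(u^2-u_x^2)+k_0\frac{u}{u^2-u_x^2},\qquad h_2=h_3=0,$$ where $k_1$ is an arbitrary function of one variable and $k_0$ is an arbitrary constant. (ii) Any function $k$ of this form is a total $x$-derivative: $$k=D_x\Big(\tfrac12K_1(u^2-u_x^2)+\tfrac12k_0\ln\Big(\frac{u-u_x}{u+u_x}\Big)+k_0x\Big),$$ where $K_1$ is a function with $K_1'=k_1$.
   Context: $D_x$ is the total $x$-derivative acting on functions of $x$, $u$ and $x$-derivatives of $u$. The Euler operator with respect to $u$ is $\hat E_u=\partial_u-D_x\partial_{u_x}+D_x^2\partial_{u_{xx}}-D_x^3\partial_{u_{xxx}}+\cdots$. Expressions are considered on open sets where they are defined (e.g. $u^2\neq u_x^2$). *)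

From Stdlib Require Import Reals List.
Import ListNotations.
From Coquelicot Require Import Coquelicot.
Open Scope R_scope.

(* partial derivatives of a function h(u,p), p standing for u_x *)
Definition pu (f : R -> R -> R) : R -> R -> R :=
  fun u p => Derive (fun t => f t p) u.
Definition pp (f : R -> R -> R) : R -> R -> R :=
  fun u p => Derive (fun t => f u t) p.

(* iterated partial derivative: true = d/du, false = d/dp *)
Fixpoint iterd (l : list bool) (f : R -> R -> R) : R -> R -> R :=
  match l with
  | nil => f
  | cons b l' => (if b then pu else pp) (iterd l' f)
  end.

Definition smooth_on (U : R -> R -> Prop) (f : R -> R -> R) : Prop :=
  forall (l : list bool) (u p : R), U u p ->
    ex_derive (fun t => iterd l f t p) u /\
    ex_derive (fun t => iterd l f u t) p /\
    continuous (fun z : R * R => iterd l f (fst z) (snd z)) (u, p).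

(* The four connected components of { (u,p) | u^2 <> p^2 }:
   b = true : s*u > |p| ; b = false : s*p > |u| ; with s = +1 or -1. *)
Definition sgn (s : bool) : R := if s then 1 else -1.
Definition cone (b s : bool) (u p : R) : Prop :=
  if b then sgn s * u > Rabs p else sgn s * p > Rabs u.

(* a jet point: j 0 = u, j 1 = u_x, j 2 = u_xx, ... *)
Definition jet := nat -> R.
Definition difffun := R -> jet -> R.

Definition upd (j : jet) (i : nat) (t : R) : jet :=
  fun n => if Nat.eqb n i then t else j n.

Definition pjet (i : nat) (F : difffun) : difffun :=
  fun x j => Derive (fun t => F x (upd j i t)) (j i).

Definition px (F : difffun) : difffun :=
  fun x j => Derive (fun t => F t j) x.

Definition TotD (F : difffun) : difffun :=
  fun x j => px F x j + Series (fun i => j (S i) * pjet i F x j).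

Definition Euler (F : difffun) : difffun :=
  fun x j => Series (fun i => (-1) ^ i * Nat.iter i TotD (pjet i F) x j).

Definition kfun (h1 h2 h3 : R -> R -> R) : difffun :=
  fun x j =>
    let m := j 0%nat - j 2%nat in
    h1 (j 0%nat) (j 1%nat) * m + h2 (j 0%nat) (j 1%nat) * m ^ 2
    + h3 (j 0%nat) (j 1%nat) * m ^ 3.

Definition h1form (k1 : R -> R) (k0 : R) : R -> R -> R :=
  fun u p => p * k1 (u ^ 2 - p ^ 2) + k0 * u / (u ^ 2 - p ^ 2).

Definition potential (K1 : R -> R) (k0 : R) : difffun :=
  fun x j =>
    / 2 * K1 (j 0%nat ^ 2 - j 1%nat ^ 2)
    + / 2 * k0 * ln (Rabs ((j 0%nat - j 1%nat) / (j 0%nat + j 1%nat)))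
    + k0 * x.

From Stdlib Require Import Reals Lia Lra.
From Coquelicot Require Import Coquelicot.
Open Scope R_scope.

(* For k depending on u, u_x, u_xx one has E(k) = k_u - D_x k_{u_x} + D_x^2 k_{u_xx}, whose
   u_xxxx-coefficient is k_{u_xx u_xx} = 2 h2 + 6 h3 m; hence E(k) = 0 forces h2 = h3 = 0. For
   k = h m a direct computation gives E(k) = B - u_xx A, and A, B are tied to the function
   R = u h - u_x (u_x h_u + u h_{u_x}) by R_u = B and R_{u_x} = -u_x A. So E(k) = 0 means that
   R is a constant k0 on each of the four connected components (cones) of u^2 <> u_x^2. The
   operator u_x d_u + u d_{u_x} differentiates along the hyperbolas u^2 - u_x^2 = d, and R = k0
   becomes a linear ODE along each of them, solved by h - k0 u / d = u_x k1(d). *)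

Lemma Series_finite (a : nat -> R) n :
  (forall i, (n < i)%nat -> a i = 0) -> Series a = sum_n a n.
Proof.
intros Ha. apply is_series_unique.
apply (filterlim_ext_loc (fun _ => sum_n a n)); [| apply filterlim_const].
exists n. intros m Hm. induction Hm as [| m Hm IH]; auto.
rewrite sum_Sn, <- IH, Ha by lia. symmetry. apply Rplus_0_r.
Qed.

Lemma is_derive_0_eq (f : R -> R) a b :
  (forall t, Rmin a b <= t <= Rmax a b -> is_derive f t 0) -> f a = f b.
Proof.
intros H. destruct (Rle_lt_dec a b) as [[Hab | ->] | Hab]; auto.
- apply eq_is_derive; auto. intros t Ht. apply H. rewrite Rmin_left, Rmax_right; lra.
- symmetry. apply eq_is_derive; auto. intros t Ht. apply H. rewrite Rmin_right, Rmax_left; lra.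
Qed.

Lemma is_derive_locally_const (f : R -> R) x c l :
  locally x (fun t => f t = c) -> is_derive f x l -> l = 0.
Proof.
intros Hc Hl. rewrite <- (is_derive_unique _ _ _ Hl), (Derive_ext_loc _ (fun _ => c)) by exact Hc.
apply Derive_const.
Qed.

Lemma is_derive_linear_on_ray (G : R -> R) l k sigma :
  is_derive G 0 l -> G 0 = 0 -> sigma = 1 \/ sigma = -1 ->
  (forall t, 0 < sigma * t -> G t = k * t) -> k = l.
Proof.
intros HD H0 Hsigma Hk. apply cond_eq. intros eps Heps.
destruct (proj1 (is_derive_Reals G 0 l) HD eps Heps) as [del Hdel].
assert (Hdel0 := cond_pos del).
assert (Ht : 0 < sigma * (sigma * (del / 2))) by (destruct Hsigma as [-> | ->]; lra).
assert (Habs : Rabs (sigma * (del / 2)) < del)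
  by (destruct Hsigma as [-> | ->]; rewrite ?Rmult_1_l, ?Rabs_mult, ?Rabs_m1, ?Rabs_pos_eq; lra).
specialize (Hdel (sigma * (del / 2)) ltac:(intros E; rewrite E in Ht; lra) Habs).
rewrite Rplus_0_l, H0, Rminus_0_r, Hk in Hdel by exact Ht.
replace (k * (sigma * (del / 2)) / (sigma * (del / 2))) with k in Hdel
  by (field; destruct Hsigma as [-> | ->]; lra).
exact Hdel.
Qed.

(* G is linear on each half-line since (G / t)' = 0 there, and both slopes equal G'(0). *)
Lemma linear_of_t_derive_eq (G dG : R -> R) :
  (forall t, is_derive G t (dG t)) -> (forall t, t * dG t = G t) ->
  forall t, G t = t * G 1.
Proof.
intros HD HE.
assert (G0 : G 0 = 0) by (rewrite <- HE; ring).
assert (Hray : forall a t, 0 < a * t -> G t = G a / a * t).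
{ intros a t Hat. assert (Ha : a <> 0) by (intros ->; lra). assert (Ht : t <> 0) by (intros ->; lra).
  enough (E : G a / a = G t / t) by (rewrite E; field; auto).
  apply (is_derive_0_eq (fun r => G r / r)). intros r Hr.
  assert (Hr0 : r <> 0).
  { intros ->. unfold Rmin, Rmax in Hr. destruct Rle_dec; nra. }
  replace 0 with ((dG r * r - G r * 1) / r ^ 2) by (rewrite <- (HE r); field; auto).
  apply (is_derive_div G (fun r => r)); auto. now auto_derive. }
assert (Hslope : forall sigma, sigma = 1 \/ sigma = -1 -> G sigma / sigma = dG 0).
{ intros sigma Hsigma. apply (is_derive_linear_on_ray G _ _ sigma); auto. }
intros t. destruct (Rtotal_order t 0) as [Ht | [-> | Ht]].
- rewrite (Hray (-1) t), (Hslope (-1)), <- (Hslope 1) by (auto || nra). field.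
- rewrite G0. ring.
- rewrite (Hray 1 t) by nra. field.
Qed.

Lemma is_derive_ln_abs (f : R -> R) x df : is_derive f x df -> f x <> 0 ->
  is_derive (fun t => ln (Rabs (f t))) x (df / f x).
Proof.
intros Hf Hx. auto_derive.
- repeat split; auto; [now exists df | now apply Rabs_pos_lt].
- replace (Derive (fun t : R => f t) x) with df by (symmetry; now apply is_derive_unique).
  destruct (Rlt_or_le (f x) 0) as [Hneg | Hpos].
  + rewrite sign_eq_m1, Rabs_left by auto. field. auto.
  + rewrite sign_eq_1, Rabs_right by lra. field. auto.
Qed.

Lemma upd_at (j : jet) i t : upd j i t i = t.
Proof. unfold upd. now rewrite Nat.eqb_refl. Qed.

Lemma upd_other (j : jet) i t n : n <> i -> upd j i t n = j n.
Proof. intros Hn. unfold upd. now destruct (Nat.eqb_spec n i). Qed.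

Definition depends_below (N : nat) (F : difffun) : Prop :=
  forall x (j j' : jet), (forall i, (i < N)%nat -> j i = j' i) -> F x j = F x j'.

Definition autonomous (F : difffun) : Prop := forall x y j, F x j = F y j.

Lemma depends_below_le M N F : (M <= N)%nat -> depends_below M F -> depends_below N F.
Proof. intros HMN HF x j j' Hj. apply HF. intros i Hi. apply Hj. lia. Qed.

Lemma depends_below_upd N F x j i t :
  depends_below N F -> (N <= i)%nat -> F x (upd j i t) = F x j.
Proof. intros HF Hi. apply HF. intros n Hn. apply upd_other. lia. Qed.

Lemma pjet_beyond N F i x j : depends_below N F -> (N <= i)%nat -> pjet i F x j = 0.
Proof.
intros HF Hi. unfold pjet.
rewrite (Derive_ext _ (fun _ => F x j)) by (intros t; now apply (depends_below_upd N)).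
apply Derive_const.
Qed.

Lemma px_autonomous F x j : autonomous F -> px F x j = 0.
Proof.
intros HF. unfold px. rewrite (Derive_ext _ (fun _ => F x j)) by (intros t; apply HF).
apply Derive_const.
Qed.

Lemma depends_below_pjet N F i : depends_below N F -> depends_below N (pjet i F).
Proof.
intros HF x j j' Hj. destruct (Nat.le_gt_cases N i) as [Hi | Hi].
- now rewrite !(pjet_beyond N F i).
- unfold pjet. rewrite (Hj i Hi). apply Derive_ext. intros t. apply HF.
  intros n Hn. unfold upd. destruct (Nat.eqb n i); auto.
Qed.

Lemma autonomous_pjet F i : autonomous F -> autonomous (pjet i F).
Proof. intros HF x y j. unfold pjet. apply Derive_ext. intros t. apply HF. Qed.

Lemma depends_below_TotD N F : depends_below N F -> depends_below (S N) (TotD F).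
Proof.
intros HF x j j' Hj. unfold TotD. f_equal.
- unfold px. apply Derive_ext. intros t. apply HF. intros i Hi. apply Hj. lia.
- apply Series_ext. intros i. destruct (Nat.le_gt_cases N i) as [Hi | Hi].
  + rewrite !(pjet_beyond N F i) by auto. ring.
  + rewrite (Hj (S i)) by lia. f_equal.
    apply (depends_below_pjet N F i HF). intros n Hn. apply Hj. lia.
Qed.

Lemma autonomous_TotD F : autonomous F -> autonomous (TotD F).
Proof.
intros HF x y j. unfold TotD. rewrite !px_autonomous by auto.
f_equal. apply Series_ext. intros i. now rewrite (autonomous_pjet F i HF x y).
Qed.

Lemma TotD_expand4 G x j : depends_below 4 G -> autonomous G ->
  TotD G x j = j 1%nat * pjet 0 G x j + j 2%nat * pjet 1 G x j
             + j 3%nat * pjet 2 G x j + j 4%nat * pjet 3 G x j.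
Proof.
intros HG HA. unfold TotD. rewrite px_autonomous by auto. rewrite (Series_finite _ 3).
- rewrite !sum_Sn, sum_O. unfold plus; simpl. ring.
- intros i Hi. rewrite (pjet_beyond 4) by (auto; lia). ring.
Qed.

Lemma TotD_zero G x j : (forall x j, G x j = 0) -> TotD G x j = 0.
Proof.
intros HG. assert (HG0 : depends_below 0 G) by (intros ? ? ? _; now rewrite !HG).
unfold TotD. rewrite (Series_finite _ 0).
- rewrite sum_O, (pjet_beyond 0) by (auto; lia). unfold px.
  rewrite (Derive_ext _ (fun _ => 0)) by auto. rewrite Derive_const. ring.
- intros i _. rewrite (pjet_beyond 0) by (auto; lia). ring.
Qed.

Lemma iter_TotD_zero n G x j : (forall x j, G x j = 0) -> Nat.iter n TotD G x j = 0.
Proof.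
revert x j. induction n as [| n IH]; intros x j HG; simpl; auto.
apply TotD_zero. intros; now apply IH.
Qed.

Lemma Euler_expand3 F x j : depends_below 3 F ->
  Euler F x j = pjet 0 F x j - TotD (pjet 1 F) x j + TotD (TotD (pjet 2 F)) x j.
Proof.
intros HF. unfold Euler. rewrite (Series_finite _ 2).
- rewrite !sum_Sn, sum_O. unfold plus; simpl. ring.
- intros i Hi. rewrite iter_TotD_zero; [ring |].
  intros; now apply (pjet_beyond 3).
Qed.

Lemma pjet_TotD_top G x j : depends_below 3 G -> autonomous G ->
  pjet 3 (TotD G) x j = pjet 2 G x j.
Proof.
intros HG HA. unfold pjet at 1.
rewrite (Derive_ext _ (fun t => j 1%nat * pjet 0 G x j + j 2%nat * pjet 1 G x j + t * pjet 2 G x j)).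
- apply is_derive_unique. auto_derive; auto. ring.
- intros t. rewrite TotD_expand4 by (try apply (depends_below_le 3); auto).
  rewrite (pjet_beyond 3 G 3) by auto. rewrite upd_at, !upd_other by lia.
  rewrite !(depends_below_upd 3 (pjet _ G)) by (auto using depends_below_pjet). ring.
Qed.

Lemma Euler_upd_top F x j y : depends_below 3 F -> autonomous F ->
  Euler F x (upd j 4 y) = Euler F x j + (y - j 4%nat) * pjet 2 (pjet 2 F) x j.
Proof.
intros HF HA.
assert (HP : forall i, depends_below 3 (pjet i F)) by (intros; now apply depends_below_pjet).
assert (HQ : depends_below 4 (TotD (pjet 2 F))) by now apply depends_below_TotD.
assert (HAQ : autonomous (TotD (pjet 2 F))) by now apply autonomous_TotD, autonomous_pjet.
rewrite !Euler_expand3 by auto. rewrite !(TotD_expand4 (TotD (pjet 2 F))) by auto.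
rewrite !pjet_TotD_top by auto using autonomous_pjet.
rewrite (depends_below_upd 3 (pjet 0 F)), (depends_below_upd 4 (TotD (pjet 1 F)))
  by auto using depends_below_TotD.
rewrite !(depends_below_upd 4 (pjet _ (TotD (pjet 2 F)))) by auto using depends_below_pjet.
rewrite (depends_below_upd 3 (pjet 2 (pjet 2 F))) by auto using depends_below_pjet.
rewrite upd_at, !upd_other by lia. ring.
Qed.

Section OpenSet.

Variable U : R -> R -> Prop.
Hypothesis U_open : forall u p, U u p -> locally_2d U u p.

Lemma locally_u u p : U u p -> locally u (fun t => U t p).
Proof. intros H. now apply locally_2d_1d_const_y, U_open. Qed.

Lemma locally_p u p : U u p -> locally p (fun t => U u t).
Proof. intros H. now apply locally_2d_1d_const_x, U_open. Qed.

Lemma locally_upd (j : jet) i : U (j 0%nat) (j 1%nat) ->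
  locally (j i) (fun t => U (upd j i t 0%nat) (upd j i t 1%nat)).
Proof.
intros H. destruct i as [| [| i]]; unfold upd; simpl.
- now apply locally_u.
- now apply locally_p.
- now apply filter_forall.
Qed.

Definition eq_on (F G : difffun) : Prop :=
  forall x (j : jet), U (j 0%nat) (j 1%nat) -> F x j = G x j.

Lemma eq_on_pjet i F G : eq_on F G -> eq_on (pjet i F) (pjet i G).
Proof.
intros H x j Hj. unfold pjet. apply Derive_ext_loc.
generalize (locally_upd j i Hj). apply filter_imp. intros t Ht. now apply H.
Qed.

Lemma eq_on_TotD F G : eq_on F G -> eq_on (TotD F) (TotD G).
Proof.
intros H x j Hj. unfold TotD, px. f_equal.
- apply Derive_ext. intros t. now apply H.
- apply Series_ext. intros i. f_equal. now apply eq_on_pjet.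
Qed.

Lemma eq_on_iter_TotD n F G : eq_on F G -> eq_on (Nat.iter n TotD F) (Nat.iter n TotD G).
Proof. intros H. induction n as [| n IH]; simpl; auto using eq_on_TotD. Qed.

Lemma eq_on_Euler F G : eq_on F G -> eq_on (Euler F) (Euler G).
Proof.
intros H x j Hj. unfold Euler. apply Series_ext. intros i. f_equal.
apply eq_on_iter_TotD; auto using eq_on_pjet.
Qed.

Lemma iterd_app l l' f : iterd (l ++ l') f = iterd l (iterd l' f).
Proof. induction l as [| b l IH]; simpl; now rewrite ?IH. Qed.

Lemma smooth_on_pu f : smooth_on U f -> smooth_on U (pu f).
Proof. intros Hf l. change (pu f) with (iterd (true :: nil) f). rewrite <- iterd_app. apply Hf. Qed.

Lemma smooth_on_pp f : smooth_on U f -> smooth_on U (pp f).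
Proof. intros Hf l. change (pp f) with (iterd (false :: nil) f). rewrite <- iterd_app. apply Hf. Qed.

Lemma smooth_ex_derive_u f u p : smooth_on U f -> U u p -> ex_derive (fun t => f t p) u.
Proof. intros Hf Hc. exact (proj1 (Hf nil u p Hc)). Qed.

Lemma smooth_ex_derive_p f u p : smooth_on U f -> U u p -> ex_derive (fun t => f u t) p.
Proof. intros Hf Hc. exact (proj1 (proj2 (Hf nil u p Hc))). Qed.

Lemma smooth_continuous f u p : smooth_on U f -> U u p ->
  continuous (fun z : R * R => f (fst z) (snd z)) (u, p).
Proof. intros Hf Hc. exact (proj2 (proj2 (Hf nil u p Hc))). Qed.

(* Mean value theorem in u with the continuity of pu f, plus differentiability in p. *)
Lemma smooth_differentiable f u p : smooth_on U f -> U u p ->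
  differentiable_pt_lim f u p (pu f u p) (pp f u p).
Proof.
intros Hf Hc eps.
assert (He2 : 0 < eps / 2) by (destruct eps; simpl; lra).
assert (Hcont := smooth_continuous (pu f) u p (smooth_on_pu f Hf) Hc).
destruct (Hcont _ (locally_ball (pu f u p) (mkposreal _ He2))) as [d1 Hd1].
assert (Dp : derivable_pt_lim (fun t => f u t) p (pp f u p)).
{ apply is_derive_Reals, Derive_correct, smooth_ex_derive_p; auto. }
destruct (Dp _ He2) as [d2 Hd2].
destruct (U_open _ _ Hc) as [d3 Hd3].
assert (Hd : 0 < Rmin d1 (Rmin d2 d3)).
{ destruct d1, d2, d3; simpl. repeat apply Rmin_glb_lt; auto. }
exists (mkposreal _ Hd). simpl. intros u' v Hu Hv.
pose proof (Rmin_l d1 (Rmin d2 d3)). pose proof (Rmin_r d1 (Rmin d2 d3)).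
pose proof (Rmin_l d2 d3). pose proof (Rmin_r d2 d3).
destruct (MVT_cor4 (fun t => f t v) (fun c => pu f c v) u (Rabs (u' - u))) with (b := u')
  as [c [Hmvt Hcu]]; [| lra |].
{ intros c Hcu. apply Derive_correct, smooth_ex_derive_u; auto. apply Hd3; lra. }
assert (Hpc : Rabs (pu f c v - pu f u p) < eps / 2).
{ apply (Hd1 (c, v)). split; [change (Rabs (c - u) < d1) | change (Rabs (v - p) < d1)]; lra. }
assert (Hq : Rabs (f u v - f u p - pp f u p * (v - p)) <= eps / 2 * Rabs (v - p)).
{ destruct (Req_dec v p) as [-> | Hvp].
  - rewrite !Rminus_diag, Rmult_0_r, Rminus_0_r, Rabs_R0. lra.
  - specialize (Hd2 (v - p) ltac:(lra) ltac:(lra)). replace (p + (v - p)) with v in Hd2 by ring.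
    replace (f u v - f u p - pp f u p * (v - p))
      with (((f u v - f u p) / (v - p) - pp f u p) * (v - p)) by (field; lra).
    rewrite Rabs_mult. apply Rmult_le_compat_r; [apply Rabs_pos | lra]. }
replace (f u' v - f u p - (pu f u p * (u' - u) + pp f u p * (v - p)))
  with ((pu f c v - pu f u p) * (u' - u) + (f u v - f u p - pp f u p * (v - p)))
  by (cbv beta in Hmvt; lra).
eapply Rle_trans; [apply Rabs_triang |]. rewrite Rabs_mult.
assert (Rabs (pu f c v - pu f u p) * Rabs (u' - u) <= eps / 2 * Rabs (u' - u))
  by (apply Rmult_le_compat_r; [apply Rabs_pos | lra]).
pose proof (Rmax_l (Rabs (u' - u)) (Rabs (v - p))).
pose proof (Rmax_r (Rabs (u' - u)) (Rabs (v - p))).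
pose proof (cond_pos eps). nra.
Qed.

Lemma is_derive_smooth_comp f (a q : R -> R) t da dq : smooth_on U f -> U (a t) (q t) ->
  is_derive a t da -> is_derive q t dq ->
  is_derive (fun s => f (a s) (q s)) t (pu f (a t) (q t) * da + pp f (a t) (q t) * dq).
Proof.
intros Hf Hc Ha Hq. apply is_derive_Reals, derivable_pt_lim_comp_2d;
  [now apply smooth_differentiable | now apply is_derive_Reals ..].
Qed.

End OpenSet.

(** * The Euler operator of h1 m + h2 m^2 + h3 m^3 *)

Ltac fold_partials :=
  repeat match goal with
  | |- context [Derive (fun t => ?f t ?p) ?u] => change (Derive (fun t => f t p) u) with (pu f u p)
  | |- context [Derive (fun t => ?f ?u t) ?p] => change (Derive (fun t => f u t) p) with (pp f u p)
  end.

(* Matching on the goal first matters: [apply smooth_on_pu] against [smooth_on U f] would try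
   to unify [f] with [pu ?g], which does not terminate. *)
Ltac smooth_on_partials :=
  repeat match goal with
  | |- smooth_on _ (pu _) => apply smooth_on_pu
  | |- smooth_on _ (pp _) => apply smooth_on_pp
  end; assumption.

Ltac smooth_ex_derive :=
  match goal with
  | |- True => exact I
  | |- ex_derive (fun t => ?f t ?p) ?u =>
      match goal with HU : ?U u p |- _ =>
        apply (smooth_ex_derive_u U f u p); [smooth_on_partials | exact HU] end
  | |- ex_derive (fun t => ?f ?u t) ?p =>
      match goal with HU : ?U u p |- _ =>
        apply (smooth_ex_derive_p U f u p); [smooth_on_partials | exact HU] end
  end.

Ltac smooth_side_conditions := repeat match goal with |- _ /\ _ => split end; smooth_ex_derive.

(* Partials must be folded first: auto_derive rewrites [Derive (fun t => f t p) u] to itself. *)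
Ltac compute_Derive :=
  fold_partials;
  match goal with |- context [Derive ?f ?x] =>
    erewrite (is_derive_unique f x); [| auto_derive; [smooth_side_conditions | reflexivity]]
  end.

Ltac jet_calc := cbv beta iota delta [pjet upd Nat.eqb]; repeat compute_Derive; fold_partials; ring.

Definition klin (h : R -> R -> R) : difffun := kfun h (fun _ _ => 0) (fun _ _ => 0).

Lemma depends_below_kfun h1 h2 h3 : depends_below 3 (kfun h1 h2 h3).
Proof. intros x j j' Hj. unfold kfun. now rewrite !Hj by lia. Qed.

Lemma autonomous_kfun h1 h2 h3 : autonomous (kfun h1 h2 h3).
Proof. now intros x y j. Qed.

Lemma pjet2_kfun h1 h2 h3 x (j : jet) : let u := j 0%nat in let p := j 1%nat in
  let m := j 0%nat - j 2%nat in
  pjet 2 (kfun h1 h2 h3) x j = - (h1 u p + 2 * h2 u p * m + 3 * h3 u p * m ^ 2).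
Proof. unfold kfun. jet_calc. Qed.

Lemma pjet2_pjet2_kfun h1 h2 h3 x (j : jet) :
  pjet 2 (pjet 2 (kfun h1 h2 h3)) x j
  = 2 * h2 (j 0%nat) (j 1%nat) + 6 * h3 (j 0%nat) (j 1%nat) * (j 0%nat - j 2%nat).
Proof.
unfold pjet at 1. rewrite (Derive_ext _ _ _ (fun t => pjet2_kfun h1 h2 h3 x (upd j 2 t))).
jet_calc.
Qed.

Definition euler_coef1 (h : R -> R -> R) (u p : R) : R :=
  2 * pu h u p + u * pp (pp h) u p + p * pp (pu h) u p.
Definition euler_coef0 (h : R -> R -> R) (u p : R) : R :=
  u * pu h u p + h u p - p * u * pu (pp h) u p - p * pp h u p - p ^ 2 * pu (pu h) u p.

Definition jet3 (u p w : R) : jet :=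
  fun n => match n with 0%nat => u | 1%nat => p | _ => w end.

Section EulerKlin.

Variable U : R -> R -> Prop.
Hypothesis U_open : forall u p, U u p -> locally_2d U u p.
Variable h : R -> R -> R.
Hypothesis h_smooth : smooth_on U h.

Lemma pjet0_klin f x (j : jet) : smooth_on U f -> U (j 0%nat) (j 1%nat) ->
  pjet 0 (klin f) x j = pu f (j 0%nat) (j 1%nat) * (j 0%nat - j 2%nat) + f (j 0%nat) (j 1%nat).
Proof. intros Hf Hj. unfold klin, kfun. jet_calc. Qed.

Lemma pjet1_klin f x (j : jet) : smooth_on U f -> U (j 0%nat) (j 1%nat) ->
  pjet 1 (klin f) x j = pp f (j 0%nat) (j 1%nat) * (j 0%nat - j 2%nat).
Proof. intros Hf Hj. unfold klin, kfun. jet_calc. Qed.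

Lemma pjet2_klin f x (j : jet) : pjet 2 (klin f) x j = - f (j 0%nat) (j 1%nat).
Proof. unfold klin. rewrite pjet2_kfun. ring. Qed.

Lemma TotD_klin f x (j : jet) : smooth_on U f -> U (j 0%nat) (j 1%nat) ->
  let u := j 0%nat in let p := j 1%nat in let m := j 0%nat - j 2%nat in
  TotD (klin f) x j
  = j 1%nat * (pu f u p * m + f u p) + j 2%nat * (pp f u p * m) - j 3%nat * f u p.
Proof.
intros Hf Hj; cbv zeta. rewrite TotD_expand4.
- rewrite pjet0_klin, pjet1_klin, pjet2_klin, (pjet_beyond 3 (klin f) 3)
    by (auto; apply depends_below_kfun).
  ring.
- apply (depends_below_le 3); [lia | apply depends_below_kfun].
- apply autonomous_kfun.
Qed.

Ltac explicit_dependence :=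
  first [intros ? ? ? Hjj; now rewrite ?Hjj by lia | now intros ? ? ?].

Lemma TotD_pjet2_klin x (j : jet) : U (j 0%nat) (j 1%nat) ->
  TotD (pjet 2 (klin h)) x j
  = - (j 1%nat * pu h (j 0%nat) (j 1%nat) + j 2%nat * pp h (j 0%nat) (j 1%nat)).
Proof.
intros Hj.
rewrite (eq_on_TotD U U_open _ (fun _ j => - h (j 0%nat) (j 1%nat))) by
  (auto; intros ? ? _; apply pjet2_klin).
rewrite TotD_expand4 by explicit_dependence.
rewrite (pjet_beyond 2 _ 2), (pjet_beyond 2 _ 3) by (explicit_dependence || lia).
jet_calc.
Qed.

Lemma TotD2_pjet2_klin x (j : jet) : U (j 0%nat) (j 1%nat) ->
  let u := j 0%nat in let p := j 1%nat in let w := j 2%nat in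
  TotD (TotD (pjet 2 (klin h))) x j
  = - (p * (p * pu (pu h) u p + w * pp (pu h) u p)
       + w * (pu h u p + p * pu (pp h) u p + w * pp (pp h) u p) + j 3%nat * pp h u p).
Proof.
intros Hj; cbv zeta.
rewrite (eq_on_TotD U U_open _
  (fun _ j => - (j 1%nat * pu h (j 0%nat) (j 1%nat) + j 2%nat * pp h (j 0%nat) (j 1%nat))))
  by (auto; intros ? ? Hj'; now apply TotD_pjet2_klin).
rewrite TotD_expand4 by explicit_dependence.
rewrite (pjet_beyond 3 _ 3) by (explicit_dependence || lia).
jet_calc.
Qed.

Lemma Euler_klin x (j : jet) : U (j 0%nat) (j 1%nat) ->
  Euler (klin h) x j
  = euler_coef0 h (j 0%nat) (j 1%nat) - j 2%nat * euler_coef1 h (j 0%nat) (j 1%nat).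
Proof.
intros Hj. rewrite Euler_expand3 by apply depends_below_kfun.
rewrite (eq_on_TotD U U_open _ (klin (pp h))) by
  (auto; intros ? ? Hj'; rewrite pjet1_klin by auto; unfold klin, kfun; ring).
rewrite pjet0_klin, TotD_klin, TotD2_pjet2_klin by auto using smooth_on_pp.
unfold euler_coef0, euler_coef1. ring.
Qed.

Lemma euler_coefs_of_Euler_klin :
  (forall x (j : jet), U (j 0%nat) (j 1%nat) -> Euler (klin h) x j = 0) ->
  forall u p, U u p -> euler_coef0 h u p = 0 /\ euler_coef1 h u p = 0.
Proof.
intros HE u p Hc.
pose proof (HE 0 (jet3 u p 0) Hc) as H0. pose proof (HE 0 (jet3 u p 1) Hc) as H1.
rewrite Euler_klin in H0, H1 by exact Hc. simpl in H0, H1. lra.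
Qed.

End EulerKlin.

Section EulerKfun.

Variable U : R -> R -> Prop.
Hypothesis U_open : forall u p, U u p -> locally_2d U u p.
Variables h1 h2 h3 : R -> R -> R.

Lemma Euler_kfun_eq_Euler_klin x (j : jet) :
  (forall u p, U u p -> h2 u p = 0 /\ h3 u p = 0) -> U (j 0%nat) (j 1%nat) ->
  Euler (kfun h1 h2 h3) x j = Euler (klin h1) x j.
Proof.
intros H23 Hj. apply (eq_on_Euler U U_open); auto.
intros x' j' Hj'. unfold klin, kfun. now destruct (H23 _ _ Hj') as [-> ->].
Qed.

Lemma h2_h3_zero_of_Euler :
  (forall x (j : jet), U (j 0%nat) (j 1%nat) -> Euler (kfun h1 h2 h3) x j = 0) ->
  forall u p, U u p -> h2 u p = 0 /\ h3 u p = 0.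
Proof.
intros HE u p Hc.
assert (Hcoef : forall w, 2 * h2 u p + 6 * h3 u p * (u - w) = 0).
{ intros w. set (j := jet3 u p w).
  transitivity (pjet 2 (pjet 2 (kfun h1 h2 h3)) 0 j); [now rewrite pjet2_pjet2_kfun |].
  pose proof (Euler_upd_top (kfun h1 h2 h3) 0 j (j 4%nat + 1) (depends_below_kfun h1 h2 h3)
    (autonomous_kfun h1 h2 h3)) as Htop.
  rewrite !HE in Htop by auto. replace (j 4%nat + 1 - j 4%nat) with 1 in Htop by ring. lra. }
pose proof (Hcoef u) as H0. pose proof (Hcoef (u - 1)) as H1. split; nra.
Qed.

End EulerKfun.

(** * The first integral *)

Definition rot (h : R -> R -> R) (u p : R) : R := p * pu h u p + u * pp h u p.

Definition first_integral (h : R -> R -> R) (u p : R) : R := u * h u p - p * rot h u p.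

Section FirstIntegral.

Variable U : R -> R -> Prop.
Hypothesis U_open : forall u p, U u p -> locally_2d U u p.
Variable h : R -> R -> R.
Hypothesis h_smooth : smooth_on U h.

Lemma is_derive_first_integral_u u p : U u p ->
  is_derive (fun t => first_integral h t p) u (euler_coef0 h u p).
Proof.
intros Hc. unfold first_integral, rot, euler_coef0.
auto_derive; [smooth_side_conditions | fold_partials; ring].
Qed.

Lemma is_derive_first_integral_p u p : U u p ->
  is_derive (fun t => first_integral h u t) p (- p * euler_coef1 h u p).
Proof.
intros Hc. unfold first_integral, rot, euler_coef1.
auto_derive; [smooth_side_conditions | fold_partials; ring].
Qed.

Lemma euler_coefs_of_first_integral_const c u p :
  (forall u p, U u p -> first_integral h u p = c) -> U u p ->
  euler_coef0 h u p = 0 /\ euler_coef1 h u p = 0.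
Proof.
intros Hc Hup.
assert (Hp : forall t, U u t -> t * euler_coef1 h u t = 0).
{ intros t Ht. enough (- t * euler_coef1 h u t = 0) by lra.
  apply (is_derive_locally_const (fun t => first_integral h u t) t c);
    [| now apply is_derive_first_integral_p].
  generalize (locally_p U U_open u t Ht). apply filter_imp. auto. }
split.
- apply (is_derive_locally_const (fun t => first_integral h t p) u c);
    [| now apply is_derive_first_integral_u].
  generalize (locally_u U U_open u p Hup). apply filter_imp. auto.
- destruct (Req_dec p 0) as [-> | Hp0]; [| apply (Rmult_eq_reg_l p); [rewrite Hp | ]; auto; ring].
  (* t * euler_coef1 h u t, which is minus the p-derivative of the first integral, vanishes
     near t = 0, and its derivative at 0 is euler_coef1 h u 0 *)
  assert (HE : ex_derive (fun t => euler_coef1 h u t) 0).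
  { unfold euler_coef1. auto_derive. smooth_side_conditions. }
  apply (is_derive_locally_const (fun t => t * euler_coef1 h u t) 0 0).
  + generalize (locally_p U U_open u 0 Hup). apply filter_imp. auto.
  + auto_derive; [exact HE | ring].
Qed.

End FirstIntegral.

(** * The four cones *)

Lemma sgn_sq s : sgn s * sgn s = 1.
Proof. destruct s; simpl; ring. Qed.

Lemma sgn_mul_pow2 s a : (sgn s * a) ^ 2 = a ^ 2.
Proof. destruct s; simpl; ring. Qed.

Lemma cone_open b s u p : cone b s u p -> locally_2d (cone b s) u p.
Proof.
intros H. destruct b; unfold cone in *.
- assert (Hd : 0 < (sgn s * u - Rabs p) / 2) by lra.
  exists (mkposreal _ Hd). simpl. intros u' p' H1 H2.
  destruct s; unfold sgn in *; unfold Rabs in *; repeat destruct Rcase_abs; lra.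
- assert (Hd : 0 < (sgn s * p - Rabs u) / 2) by lra.
  exists (mkposreal _ Hd). simpl. intros u' p' H1 H2.
  destruct s; unfold sgn in *; unfold Rabs in *; repeat destruct Rcase_abs; lra.
Qed.

Lemma cone_true_sq s u p : cone true s u p -> 0 < sgn s * u /\ p ^ 2 < u ^ 2.
Proof.
unfold cone. intros Hc. pose proof (Rabs_pos p). split; [lra |].
rewrite <- pow2_abs, <- (sgn_mul_pow2 s u). nra.
Qed.

Lemma cone_sq_diff_neq0 b s u p : cone b s u p -> u ^ 2 - p ^ 2 <> 0.
Proof.
destruct b; intros Hc; [destruct (cone_true_sq s u p Hc) | destruct (cone_true_sq s p u Hc)]; lra.
Qed.

Lemma cone_diff_sum_neq0 b s u p : cone b s u p -> u - p <> 0 /\ u + p <> 0.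
Proof.
intros Hc. pose proof (cone_sq_diff_neq0 b s u p Hc) as Hsq.
split; intros E; apply Hsq; [replace p with u | replace p with (- u)]; (ring || lra).
Qed.

Lemma cone_true_staircase s u1 p1 u2 p2 : cone true s u1 p1 -> cone true s u2 p2 ->
  exists u0, (forall t, Rmin u1 u0 <= t <= Rmax u1 u0 -> cone true s t p1)
          /\ (forall t, Rmin p1 p2 <= t <= Rmax p1 p2 -> cone true s u0 t)
          /\ (forall t, Rmin u0 u2 <= t <= Rmax u0 u2 -> cone true s t p2).
Proof.
unfold cone. intros H1 H2. exists (sgn s * Rmax (sgn s * u1) (sgn s * u2)).
pose proof (Rmax_l (sgn s * u1) (sgn s * u2)). pose proof (Rmax_r (sgn s * u1) (sgn s * u2)).
repeat split; intros t Ht; destruct s; simpl in *; unfold Rmin, Rmax, Rabs in *;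
  repeat (destruct Rle_dec || destruct Rcase_abs); lra.
Qed.

Lemma flat_const_cone_true s (f : R -> R -> R) :
  (forall u p, cone true s u p -> is_derive (fun t => f t p) u 0) ->
  (forall u p, cone true s u p -> is_derive (fun t => f u t) p 0) ->
  forall u1 p1 u2 p2, cone true s u1 p1 -> cone true s u2 p2 -> f u1 p1 = f u2 p2.
Proof.
intros Hu Hp u1 p1 u2 p2 H1 H2.
destruct (cone_true_staircase s u1 p1 u2 p2 H1 H2) as (u0 & L1 & L2 & L3).
transitivity (f u0 p1); [| transitivity (f u0 p2)];
  [apply (is_derive_0_eq (fun t => f t p1)) | apply (is_derive_0_eq (fun t => f u0 t))
  | apply (is_derive_0_eq (fun t => f t p2))]; auto.
Qed.

(* [cone false s u p] is [cone true s p u] *)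
Lemma flat_const_cone b s (f : R -> R -> R) :
  (forall u p, cone b s u p -> is_derive (fun t => f t p) u 0) ->
  (forall u p, cone b s u p -> is_derive (fun t => f u t) p 0) ->
  forall u1 p1 u2 p2, cone b s u1 p1 -> cone b s u2 p2 -> f u1 p1 = f u2 p2.
Proof.
destruct b; intros Hu Hp u1 p1 u2 p2 H1 H2.
- now apply (flat_const_cone_true s f).
- exact (flat_const_cone_true s (fun a b => f b a) (fun u p H => Hp p u H) (fun u p H => Hu p u H)
    p1 u1 p2 u2 H1 H2).
Qed.

Lemma first_integral_const_on_cone b s h :
  smooth_on (cone b s) h ->
  (forall u p, cone b s u p -> euler_coef0 h u p = 0 /\ euler_coef1 h u p = 0) ->
  exists c, forall u p, cone b s u p -> first_integral h u p = c.
Proof.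
intros Hh Hcoef.
assert (Hbase : cone b s (if b then sgn s else 0) (if b then 0 else sgn s)).
{ destruct b, s; unfold cone, sgn; rewrite Rabs_R0; lra. }
eexists. intros u p Hc. apply (flat_const_cone b s (first_integral h)); [| | exact Hc | exact Hbase].
- intros u' p' Hc'. rewrite <- (proj1 (Hcoef u' p' Hc')).
  now apply (is_derive_first_integral_u (cone b s)).
- intros u' p' Hc'.
  replace 0 with (- p' * euler_coef1 h u' p') by (rewrite (proj2 (Hcoef u' p' Hc')); ring).
  now apply (is_derive_first_integral_p (cone b s)).
Qed.

(** * Along the hyperbolas u^2 - u_x^2 = d *)

Definition hyperbola_branch (s : bool) (e t : R) : R := sgn s * sqrt (t ^ 2 + e).

Section HyperbolaBranch.

Variables (s : bool) (e : R).
Hypothesis e_pos : 0 < e.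

Lemma hyperbola_branch_sq t : hyperbola_branch s e t ^ 2 = t ^ 2 + e.
Proof.
unfold hyperbola_branch. rewrite sgn_mul_pow2, pow2_sqrt by nra. ring.
Qed.

Lemma hyperbola_branch_cone t : sgn s * hyperbola_branch s e t > Rabs t.
Proof.
unfold hyperbola_branch. rewrite <- Rmult_assoc, sgn_sq, Rmult_1_l.
rewrite <- sqrt_pow2 by apply Rabs_pos. rewrite pow2_abs.
apply Rlt_gt, sqrt_lt_1_alt. split; [nra | lra].
Qed.

Lemma hyperbola_branch_neq0 t : hyperbola_branch s e t <> 0.
Proof.
intros E. pose proof (hyperbola_branch_cone t) as Hc. rewrite E in Hc. pose proof (Rabs_pos t). lra.
Qed.

Lemma is_derive_hyperbola_branch t :
  is_derive (hyperbola_branch s e) t (t / hyperbola_branch s e t).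
Proof.
assert (Hsq : 0 < sqrt (t ^ 2 + e)) by (apply sqrt_lt_R0; nra).
unfold hyperbola_branch. auto_derive; [nra |].
replace (t * (t * 1) + e) with (t ^ 2 + e) by ring.
destruct s; unfold sgn; field; lra.
Qed.

Lemma hyperbola_branch_through a t : sgn s * a > 0 -> a ^ 2 = t ^ 2 + e ->
  hyperbola_branch s e t = a.
Proof.
intros Ha Hat. unfold hyperbola_branch.
rewrite <- Hat, <- (sgn_mul_pow2 s a), sqrt_pow2 by lra. rewrite <- Rmult_assoc, sgn_sq. ring.
Qed.

End HyperbolaBranch.

Lemma first_integral_shift h c d u p :
  first_integral h u p = c -> u ^ 2 - p ^ 2 = d -> d <> 0 ->
  (rot h u p - c * p / d) * p = (h u p - c * u / d) * u.
Proof.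
unfold first_integral. intros Hc Hd Hd0.
transitivity (p * rot h u p - c * p ^ 2 / d); [field; auto |].
replace (p * rot h u p) with (u * h u p - c) by lra.
replace (p ^ 2) with (u ^ 2 - d) by lra. field; auto.
Qed.

Section AlongHyperbolas.

Variable U : R -> R -> Prop.
Hypothesis U_open : forall u p, U u p -> locally_2d U u p.
Variable h : R -> R -> R.
Hypothesis h_smooth : smooth_on U h.
Variables c d : R.
Hypothesis d_neq0 : d <> 0.

(* The hypotheses say that (a, q) moves along a hyperbola a^2 - q^2 = const, with speed l. *)
Lemma is_derive_along_hyperbola (a q : R -> R) l t : U (a t) (q t) ->
  is_derive a t (l * q t) -> is_derive q t (l * a t) ->
  is_derive (fun r => h (a r) (q r) - c * a r / d) t (l * (rot h (a t) (q t) - c * q t / d)).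
Proof.
intros Hc Ha Hq.
replace (l * (rot h (a t) (q t) - c * q t / d))
  with (pu h (a t) (q t) * (l * q t) + pp h (a t) (q t) * (l * a t) - c * (l * q t) / d)
  by (unfold rot; field; auto).
apply (is_derive_minus (fun r => h (a r) (q r)) (fun r => c * a r / d));
  [now apply (is_derive_smooth_comp U) |].
auto_derive; [now exists (l * q t) |].
replace (Derive (fun x : R => a x) t) with (l * q t) by (symmetry; now apply is_derive_unique).
field; auto.
Qed.

Lemma first_integral_of_h1form_along k1 (a q : R -> R) l t :
  (forall u p, U u p -> h u p = h1form k1 c u p) ->
  (forall r, U (a r) (q r)) -> (forall r, a r ^ 2 - q r ^ 2 = d) ->
  is_derive a t (l * q t) -> is_derive q t (l * a t) -> l <> 0 ->
  first_integral h (a t) (q t) = c.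
Proof.
intros Hform Hc Hd Ha Hq Hl.
pose proof (is_derive_along_hyperbola a q l t (Hc t) Ha Hq) as D1.
assert (HG : forall r, h (a r) (q r) - c * a r / d = q r * k1 d).
{ intros r. rewrite Hform, <- (Hd r) by auto. unfold h1form. rewrite (Hd r). field; auto. }
assert (Hrot : l * (rot h (a t) (q t) - c * q t / d) = l * a t * k1 d).
{ apply (is_derive_ext _ _ _ _ HG), is_derive_unique in D1.
  apply (is_derive_scal_l q _ _ (k1 d)), is_derive_unique in Hq.
  rewrite <- D1. exact Hq. }
assert (Hrot' : rot h (a t) (q t) = a t * k1 d + c * q t / d).
{ apply (Rmult_eq_reg_l l); auto.
  replace (l * rot h (a t) (q t)) with (l * (rot h (a t) (q t) - c * q t / d) + l * (c * q t / d))
    by ring.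
  rewrite Hrot. ring. }
unfold first_integral. rewrite Hrot'.
replace (h (a t) (q t)) with (q t * k1 d + c * a t / d) by (rewrite <- HG; field; auto).
transitivity (c * ((a t ^ 2 - q t ^ 2) / d)); [field; auto | rewrite (Hd t); field; auto].
Qed.

End AlongHyperbolas.

Lemma h1form_of_first_integral_u_cone s h c :
  smooth_on (cone true s) h -> (forall u p, cone true s u p -> first_integral h u p = c) ->
  forall u p, cone true s u p ->
  h u p = h1form (fun d => h (hyperbola_branch s d 1) 1 - c * hyperbola_branch s d 1 / d) c u p.
Proof.
intros Hh HFI u p Hc.
destruct (cone_true_sq s u p Hc) as [Hu Hup].
set (d := u ^ 2 - p ^ 2). assert (Hd : 0 < d) by (unfold d; lra).
set (a := hyperbola_branch s d).
assert (Ha_cone : forall t, cone true s (a t) t) by (intros; now apply hyperbola_branch_cone).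
assert (Ha0 : forall t, a t <> 0) by (intros; now apply hyperbola_branch_neq0).
assert (Had : forall t, a t ^ 2 - t ^ 2 = d) by (intros; unfold a; rewrite hyperbola_branch_sq; auto; ring).
assert (Hap : a p = u) by (apply hyperbola_branch_through; auto; unfold d; ring).
set (G := fun t => h (a t) t - c * a t / d).
assert (HG : forall t, G t = t * G 1).
{ apply (linear_of_t_derive_eq G (fun t => / a t * (rot h (a t) t - c * t / d))).
  - intros t.
    apply (is_derive_along_hyperbola (cone true s) (cone_open true s) h Hh c d ltac:(lra)
      a (fun t => t)).
    + apply Ha_cone.
    + replace (/ a t * t) with (t / a t) by (field; auto). now apply is_derive_hyperbola_branch.
    + replace (/ a t * a t) with 1 by (field; auto). now auto_derive.
  - intros t. unfold G.
    transitivity (/ a t * ((rot h (a t) t - c * t / d) * t)); [ring |].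
    rewrite (first_integral_shift h c d (a t) t) by (auto; lra). field; split; auto; lra. }
specialize (HG p). unfold G in HG. rewrite Hap in HG.
unfold h1form. fold d. cbv beta. fold a. rewrite <- HG. field. lra.
Qed.

Lemma h1form_of_first_integral_p_cone s h c :
  smooth_on (cone false s) h -> (forall u p, cone false s u p -> first_integral h u p = c) ->
  forall u p, cone false s u p ->
  h u p = h1form (fun d => h 0 (hyperbola_branch s (- d) 0) / hyperbola_branch s (- d) 0) c u p.
Proof.
intros Hh HFI u p Hc.
destruct (cone_true_sq s p u Hc) as [Hp Hup].
set (d := u ^ 2 - p ^ 2). assert (Hd : 0 < - d) by (unfold d; lra).
set (q := hyperbola_branch s (- d)).
assert (Hq_cone : forall t, cone false s t (q t)) by (intros; now apply hyperbola_branch_cone).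
assert (Hq0 : forall t, q t <> 0) by (intros; now apply hyperbola_branch_neq0).
assert (Hqd : forall t, t ^ 2 - q t ^ 2 = d) by (intros; unfold q; rewrite hyperbola_branch_sq; auto; ring).
assert (Hqu : q u = p) by (apply hyperbola_branch_through; auto; unfold d; ring).
set (G := fun t => h t (q t) - c * t / d).
assert (HG : G u / q u = G 0 / q 0).
{ apply (is_derive_0_eq (fun t => G t / q t)). intros t _.
  replace 0 with ((/ q t * (rot h t (q t) - c * q t / d) * q t - G t * (t / q t)) / q t ^ 2).
  - apply is_derive_div; auto; [| now apply is_derive_hyperbola_branch].
    apply (is_derive_along_hyperbola (cone false s) (cone_open false s) h Hh c d ltac:(lra)
      (fun t => t) q).
    + apply Hq_cone.
    + replace (/ q t * q t) with 1 by (field; auto). now auto_derive.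
    + replace (/ q t * t) with (t / q t) by (field; auto). now apply is_derive_hyperbola_branch.
  - unfold G. rewrite Rmult_assoc, (first_integral_shift h c d t (q t)) by (auto; lra).
    field. split; auto; lra. }
unfold G in HG. rewrite Hqu in HG.
unfold h1form. fold d. cbv beta. fold q.
replace (h 0 (q 0) / q 0) with ((h 0 (q 0) - c * 0 / d) / q 0) by (field; split; auto; lra).
rewrite <- HG. field. split; [lra |]. intros ->. lra.
Qed.

Lemma h1form_of_first_integral b s h c :
  smooth_on (cone b s) h -> (forall u p, cone b s u p -> first_integral h u p = c) ->
  exists k1, forall u p, cone b s u p -> h u p = h1form k1 c u p.
Proof.
intros Hh HFI. destruct b; eexists; intros u p Hc;
  [apply h1form_of_first_integral_u_cone | apply h1form_of_first_integral_p_cone]; eauto.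
Qed.

Lemma first_integral_of_h1form b s h k1 c :
  smooth_on (cone b s) h -> (forall u p, cone b s u p -> h u p = h1form k1 c u p) ->
  forall u p, cone b s u p -> first_integral h u p = c.
Proof.
intros Hh Hform u p Hc. destruct b.
- destruct (cone_true_sq s u p Hc) as [Hu Hup].
  set (d := u ^ 2 - p ^ 2). assert (Hd : 0 < d) by (unfold d; lra).
  set (a := hyperbola_branch s d).
  assert (Ha0 : a p <> 0) by now apply hyperbola_branch_neq0.
  replace u with (a p) by (apply hyperbola_branch_through; auto; unfold d; ring).
  apply (first_integral_of_h1form_along (cone true s) (cone_open true s) h Hh c d
    ltac:(lra) k1 a (fun t => t) (/ a p) p); auto.
  + intros r. now apply hyperbola_branch_cone.
  + intros r. unfold a. rewrite hyperbola_branch_sq; auto. ring.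
  + replace (/ a p * p) with (p / a p) by (field; auto). now apply is_derive_hyperbola_branch.
  + replace (/ a p * a p) with 1 by (field; auto). now auto_derive.
  + now apply Rinv_neq_0_compat.
- destruct (cone_true_sq s p u Hc) as [Hp Hup].
  set (d := u ^ 2 - p ^ 2). assert (Hd : 0 < - d) by (unfold d; lra).
  set (q := hyperbola_branch s (- d)).
  assert (Hq0 : q u <> 0) by now apply hyperbola_branch_neq0.
  replace p with (q u) by (apply hyperbola_branch_through; auto; unfold d; ring).
  apply (first_integral_of_h1form_along (cone false s) (cone_open false s) h Hh c d
    ltac:(lra) k1 (fun t => t) q (/ q u) u); auto.
  + intros r. now apply hyperbola_branch_cone.
  + intros r. unfold q. rewrite hyperbola_branch_sq; auto. ring.
  + replace (/ q u * q u) with 1 by (field; auto). now auto_derive.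
  + replace (/ q u * u) with (u / q u) by (field; auto). now apply is_derive_hyperbola_branch.
  + now apply Rinv_neq_0_compat.
Qed.

(** * The potential *)

Lemma is_derive_half_sum (K L : R -> R) c x0 t dK dL :
  is_derive K t dK -> is_derive L t dL ->
  is_derive (fun r => / 2 * K r + / 2 * c * L r + x0) t (/ 2 * dK + / 2 * c * dL).
Proof.
intros HK HL. auto_derive; [split; [now exists dK | split; [now exists dL | exact I]] |].
replace (Derive (fun r : R => K r) t) with dK by (symmetry; now apply is_derive_unique).
replace (Derive (fun r : R => L r) t) with dL by (symmetry; now apply is_derive_unique). ring.
Qed.

Lemma depends_below_potential K1 k0 : depends_below 2 (potential K1 k0).
Proof. intros ? ? ? Hj. unfold potential. now rewrite !Hj by lia. Qed.

Lemma px_potential K1 k0 x j : px (potential K1 k0) x j = k0.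
Proof. unfold px, potential. apply is_derive_unique. auto_derive; auto. ring. Qed.

Section PotentialPartials.

Variables (K1 k1 : R -> R) (k0 x : R) (j : jet).
Let u := j 0%nat.
Let p := j 1%nat.
Let d := u ^ 2 - p ^ 2.
Hypothesis um_neq0 : u - p <> 0.
Hypothesis up_neq0 : u + p <> 0.
Hypothesis K1_derive : is_derive K1 d (k1 d).

Let ratio_neq0 : (u - p) / (u + p) <> 0.
Proof.
unfold Rdiv. apply Rmult_integral_contrapositive. split; auto. now apply Rinv_neq_0_compat.
Qed.

Let d_neq0 : d <> 0.
Proof.
unfold d. replace (u ^ 2 - p ^ 2) with ((u - p) * (u + p)) by ring.
now apply Rmult_integral_contrapositive.
Qed.

Lemma pjet0_potential : pjet 0 (potential K1 k0) x j = u * k1 d + k0 * p / d.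
Proof.
unfold pjet, potential. cbv beta iota delta [upd Nat.eqb]. fold u p.
apply is_derive_unique.
replace (u * k1 d + k0 * p / d) with (/ 2 * (2 * u * k1 d) + / 2 * k0 * (2 * p / d))
  by (field; apply d_neq0).
apply (is_derive_half_sum (fun t => K1 (t ^ 2 - p ^ 2)) (fun t => ln (Rabs ((t - p) / (t + p))))).
- apply (is_derive_comp K1 (fun t => t ^ 2 - p ^ 2)); [exact K1_derive |]. auto_derive; auto. ring.
- replace (2 * p / d) with ((((u + p) - (u - p)) / (u + p) ^ 2) / ((u - p) / (u + p)))
    by (unfold d; field; repeat split; auto; apply d_neq0).
  apply (is_derive_ln_abs (fun t => (t - p) / (t + p))); [| apply ratio_neq0].
  auto_derive; auto. field. auto.
Qed.

Lemma pjet1_potential : pjet 1 (potential K1 k0) x j = - p * k1 d - k0 * u / d.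
Proof.
unfold pjet, potential. cbv beta iota delta [upd Nat.eqb]. fold u p.
apply is_derive_unique.
replace (- p * k1 d - k0 * u / d) with (/ 2 * (- 2 * p * k1 d) + / 2 * k0 * (- 2 * u / d))
  by (field; apply d_neq0).
apply (is_derive_half_sum (fun t => K1 (u ^ 2 - t ^ 2)) (fun t => ln (Rabs ((u - t) / (u + t))))).
- apply (is_derive_comp K1 (fun t => u ^ 2 - t ^ 2)); [exact K1_derive |]. auto_derive; auto. ring.
- replace (- 2 * u / d) with (((- (u + p) - (u - p)) / (u + p) ^ 2) / ((u - p) / (u + p)))
    by (unfold d; field; repeat split; auto; apply d_neq0).
  apply (is_derive_ln_abs (fun t => (u - t) / (u + t))); [| apply ratio_neq0].
  auto_derive; auto. field. auto.
Qed.

Lemma TotD_potential :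
  TotD (potential K1 k0) x j
  = k0 + j 1%nat * (u * k1 d + k0 * p / d) + j 2%nat * (- p * k1 d - k0 * u / d).
Proof.
unfold TotD. rewrite (Series_finite _ 1).
- rewrite sum_Sn, sum_O. unfold plus; simpl.
  rewrite px_potential, pjet0_potential, pjet1_potential. ring.
- intros i Hi. rewrite (pjet_beyond 2) by (auto using depends_below_potential; lia). ring.
Qed.

End PotentialPartials.

Lemma klin_h1form_total_derivative b s k1 K1 k0 x (j : jet) :
  is_derive K1 (j 0%nat ^ 2 - j 1%nat ^ 2) (k1 (j 0%nat ^ 2 - j 1%nat ^ 2)) ->
  cone b s (j 0%nat) (j 1%nat) ->
  klin (h1form k1 k0) x j = TotD (potential K1 k0) x j.
Proof.
intros HK Hc. destruct (cone_diff_sum_neq0 b s _ _ Hc) as [Hm Hp].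
rewrite (TotD_potential K1 k1 k0 x j Hm Hp HK).
unfold klin, kfun, h1form. field. now apply (cone_sq_diff_neq0 b s).
Qed.

Theorem lemma3 :
  (forall (b s : bool) (h1 h2 h3 : R -> R -> R),
      smooth_on (cone b s) h1 -> smooth_on (cone b s) h2 ->
      smooth_on (cone b s) h3 ->
      ((forall (x : R) (j : jet), cone b s (j 0%nat) (j 1%nat) ->
          Euler (kfun h1 h2 h3) x j = 0)
       <->
       ((exists (k1 : R -> R) (k0 : R),
            forall u p, cone b s u p -> h1 u p = h1form k1 k0 u p)
        /\ (forall u p, cone b s u p -> h2 u p = 0 /\ h3 u p = 0))))
  /\
  (forall (b s : bool) (k1 K1 : R -> R) (k0 : R),
      (forall u p, cone b s u p ->
         is_derive K1 (u ^ 2 - p ^ 2) (k1 (u ^ 2 - p ^ 2))) ->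
      forall (x : R) (j : jet), cone b s (j 0%nat) (j 1%nat) ->
        kfun (h1form k1 k0) (fun _ _ => 0) (fun _ _ => 0) x j
        = TotD (potential K1 k0) x j).
Proof.
split.
- (* only the values of h2 and h3 matter, not their smoothness *)
  intros b s h1 h2 h3 S1 _ _. split.
  + intros HE.
    pose proof (h2_h3_zero_of_Euler _ h1 h2 h3 HE) as H23.
    assert (Hcoef := euler_coefs_of_Euler_klin _ (cone_open b s) h1 S1).
    destruct (first_integral_const_on_cone b s h1 S1) as [c Hc].
    { apply Hcoef. intros x j Hj.
      rewrite <- (Euler_kfun_eq_Euler_klin _ (cone_open b s) h1 h2 h3 x j H23 Hj). auto. }
    destruct (h1form_of_first_integral b s h1 c S1 Hc) as [k1 Hk1].
    split; [exists k1, c |]; auto.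
  + intros [[k1 [k0 Hform]] H23] x j Hj.
    rewrite (Euler_kfun_eq_Euler_klin _ (cone_open b s) h1 h2 h3 x j H23 Hj).
    rewrite (Euler_klin _ (cone_open b s) h1 S1 x j Hj).
    destruct (euler_coefs_of_first_integral_const (cone b s) (cone_open b s) h1 S1 k0 _ _
      (first_integral_of_h1form b s h1 k1 k0 S1 Hform) Hj) as [-> ->].
    ring.
- intros b s k1 K1 k0 HK x j Hj.
  exact (klin_h1form_total_derivative b s k1 K1 k0 x j (HK _ _ Hj) Hj).
Qed.
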